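(* Let $\mathcal{P}=(\{\mathcal{E}_k:k\in K\},\{M_0,M_1\})$ be a concurrent quantum program on a Hilbert space $\mathcal{H}$ of finite dimension $d$, and let $\rho_0$ be an initial density operator. Then the reachable space satisfies $$\mathcal{H}_R=\operatorname{supp}\Big(\sum_{i=0}^{d-1}\mathcal{F}^i(\rho_0)\Big),\qquad\text{where }\mathcal{F}=\sum_{k\in K}\mathcal{F}_k .$$
   Context: $\mathcal{H}$ is a complex Hilbert space of finite dimension $d\ge 1$. A super-operator on $\mathcal{H}$ is a completely positive linear map $\mathcal{E}$ on the space of linear operators on $\mathcal{H}$ with $\operatorname{tr}\mathcal{E}(\rho)\le\operatorname{tr}\rho$ for all positive $\rho$; it is trace-preserving if equality always holds. For a positive semidefinite operator $\rho$, $\operatorname{supp}(\rho)$ is the subspace spanned by the eigenvectors of $\rho$ with nonzero eigenvalues. A concurrent quantum program is a pair $\mathcal{P}=(\{\mathcal{E}_k:k\in K\},\{M_0,M_1\})$ where $K=\{1,\dots,m\}$, each $\mathcal{E}_k$ is a trace-preserving super-operator on $\mathcal{H}$, and $M_0,M_1$ are operators on $\mathcal{H}$ with $M_0^\dagger M_0+M_1^\dagger M_1=I$ (the termination measurement). For $k\in K$ define the super-operator $\mathcal{F}_k(\rho)=\mathcal{E}_k(M_1\rho M_1^\dagger)$. $S_{fin}=K^*$ is the set of finite strings over $K$; for $f=s_1s_2\cdots s_n\in S_{fin}$ put $\mathcal{F}_f=\mathcal{F}_{s_n}\circ\cdots\circ\mathcal{F}_{s_1}$ (the identity map for the empty string).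 $\mathcal{F}^i$ denotes the $i$-fold composition of $\mathcal{F}$ ($\mathcal{F}^0$ the identity). The reachable space of $\mathcal{P}$ from $\rho_0$ is $\mathcal{H}_R=\bigvee_{f\in S_{fin}}\operatorname{supp}\mathcal{F}_f(\rho_0)$, where $\bigvee$ denotes the span of the union of the subspaces. *)

From HB Require Import structures.
From mathcomp Require Import all_boot all_order all_algebra.
Set Implicit Arguments. Unset Strict Implicit. Unset Printing Implicit Defensive.
Import Order.TTheory GRing.Theory Num.Theory.
Local Open Scope ring_scope.

Section QDefs.
Variable C : numClosedFieldType.
Variable d : nat.

Definition adj (p q : nat) (A : 'M[C]_(p, q)) : 'M[C]_(q, p) :=
  (map_mx (@Num.conj C) A)^T.

Definition psd (A : 'M[C]_d) : Prop :=
  A = adj A /\ forall v : 'cV[C]_d, 0 <= (adj v *m A *m v) 0 0.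

(* positive semidefiniteness of the block operator on C^n (x) C^d whose
   (i,j) block is X i j, written out entrywise *)
Definition psd_block (n : nat) (X : 'I_n -> 'I_n -> 'M[C]_d) : Prop :=
  (forall i j, X j i = adj (X i j)) /\
  forall v : 'I_n -> 'cV[C]_d,
    0 <= \sum_(i < n) \sum_(j < n) (adj (v i) *m X i j *m v j) 0 0.

(* complete positivity: id_n (x) E preserves positivity for all n *)
Definition completely_positive (E : 'M[C]_d -> 'M[C]_d) : Prop :=
  forall (n : nat) (X : 'I_n -> 'I_n -> 'M[C]_d),
    psd_block X -> psd_block (fun i j => E (X i j)).

Definition super_operator (E : {linear 'M[C]_d -> 'M[C]_d}) : Prop :=
  completely_positive E /\
  forall rho : 'M[C]_d, psd rho -> \tr (E rho) <= \tr rho.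

Definition trace_preserving (E : {linear 'M[C]_d -> 'M[C]_d}) : Prop :=
  forall rho : 'M[C]_d, psd rho -> \tr (E rho) = \tr rho.

Definition density_operator (rho : 'M[C]_d) : Prop :=
  psd rho /\ \tr rho = 1.

(* subspaces are represented as predicates on vectors; span of a set *)
Definition span (P : 'cV[C]_d -> Prop) (v : 'cV[C]_d) : Prop :=
  exists (n : nat) (w : 'I_n -> 'cV[C]_d) (c : 'I_n -> C),
    (forall i, P (w i)) /\ v = \sum_(i < n) c i *: w i.

Definition supp (rho : 'M[C]_d) : 'cV[C]_d -> Prop :=
  span (fun w => exists a : C, a != 0 /\ rho *m w = a *: w).

Definition Fk (m : nat) (E : 'I_m -> {linear 'M[C]_d -> 'M[C]_d})
  (M1 : 'M[C]_d) (k : 'I_m) (rho : 'M[C]_d) : 'M[C]_d :=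
  E k (M1 *m rho *m adj M1).

Definition Fstr (m : nat) (E : 'I_m -> {linear 'M[C]_d -> 'M[C]_d})
  (M1 : 'M[C]_d) (f : seq 'I_m) (rho : 'M[C]_d) : 'M[C]_d :=
  foldl (fun r k => Fk E M1 k r) rho f.

Definition Fsum (m : nat) (E : 'I_m -> {linear 'M[C]_d -> 'M[C]_d})
  (M1 : 'M[C]_d) (rho : 'M[C]_d) : 'M[C]_d :=
  \sum_(k < m) Fk E M1 k rho.

Definition reachable (m : nat) (E : 'I_m -> {linear 'M[C]_d -> 'M[C]_d})
  (M1 rho0 : 'M[C]_d) : 'cV[C]_d -> Prop :=
  span (fun w => exists f : seq 'I_m, supp (Fstr E M1 f rho0) w).

End QDefs.

(* Identify a subspace with the range (column space) of an operator, and write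
   range A <= range B when A = B D for some D.  For positive semidefinite (psd)
   operators the support coincides with the range, so the claim is
     span_f range (F_f rho0) = range (S_(d-1)),   S_k = sum_(i<=k) F^i rho0.
   The proof rests on three general facts about psd operators:
   - range A <= range (A + B) for psd A, B (compare the kernels);
   - if range X <= range Y then X <= c Y for some c >= 0 (spectral theorem and
     Cauchy-Schwarz), so a positive linear map T preserves range inclusion;
   - for such T the ranges of the partial sums S_k of T^i rho increase, and
     once they stall they stay constant; by a rank count this happens at some
     k < d, so every T^n rho has range in that of S_(d-1).
   For the program, F_f rho lands in range (F^|f| rho) because each F_k is a
   summand of F, while F^n rho is the sum of the F_f rho over strings f of
   length n; the two inclusions give the theorem. *)

From Pilot Require Import Defs.
From HB Require Import structures.
From mathcomp Require Import all_boot all_order all_algebra.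
Import Defs.
Import Order.TTheory GRing.Theory Num.Theory.
Local Open Scope ring_scope.
Set Implicit Arguments. Unset Strict Implicit. Unset Printing Implicit Defensive.

Section Adjoint.
Variable C : numClosedFieldType.

Lemma adj_mul p q r (A : 'M[C]_(p, q)) (B : 'M[C]_(q, r)) :
  adj (A *m B) = adj B *m adj A.
Proof. by rewrite /adj map_mxM trmx_mul. Qed.

Lemma adjK p q (A : 'M[C]_(p, q)) : adj (adj A) = A.
Proof. by apply/matrixP=> i j; rewrite !mxE conjCK. Qed.

Lemma adjD p q (A B : 'M[C]_(p, q)) : adj (A + B) = adj A + adj B.
Proof. by apply/matrixP=> i j; rewrite !mxE rmorphD. Qed.

Lemma adjB p q (A B : 'M[C]_(p, q)) : adj (A - B) = adj A - adj B.
Proof. by apply/matrixP=> i j; rewrite !mxE rmorphB. Qed.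

Lemma adjZ p q a (A : 'M[C]_(p, q)) : adj (a *: A) = a^* *: adj A.
Proof. by apply/matrixP=> i j; rewrite !mxE rmorphM. Qed.

Lemma adj0 p q : adj (0 : 'M[C]_(p, q)) = 0.
Proof. by apply/matrixP=> i j; rewrite !mxE rmorph0. Qed.

Lemma adjE p q (A : 'M[C]_(p, q)) : (A ^t* = adj A)%sesqui.
Proof. by apply/matrixP=> i j; rewrite !mxE. Qed.

Lemma mul_diag_mx_outer n (M N : 'M[C]_n) (l : 'rV[C]_n) :
  M *m diag_mx l *m N = \sum_j l 0 j *: (col j M *m row j N).
Proof.
apply/matrixP=> a b; rewrite mul_mx_diag !mxE summxE.
by apply: eq_bigr => j _; rewrite !mxE big_ord1 !mxE mulrCA mulrA.
Qed.

End Adjoint.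

Section WeightedCauchySchwarz.
Variable C : numClosedFieldType.

(* Cauchy-Schwarz for a nonnegatively weighted sum, obtained from the library
   inequality for the standard dot product applied to the rows
   (sqrt(l_j) a_j)_j and (sqrt(l_j) b_j)_j. *)
Lemma weighted_CauchySchwarz n (l a b : 'I_n -> C) : (forall j, 0 <= l j) ->
  `|\sum_j l j * a j * (b j)^*| ^+ 2 <=
  (\sum_j l j * (a j * (a j)^*)) * (\sum_j l j * (b j * (b j)^*)).
Proof.
move=> l_ge0; pose r f : 'rV[C]_n := \row_j (sqrtC (l j) * f j).
have dotE f g : dotmx (r f) (r g) = \sum_j l j * f j * (g j)^*.
  rewrite dotmxE mxE; apply: eq_bigr => j _; rewrite !mxE rmorphM /=.
  by rewrite geC0_conj ?sqrtC_ge0 // mulrACA -expr2 sqrtCK mulrA.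
have sqE f : \sum_j l j * (f j * (f j)^*) = dotmx (r f) (r f).
  by rewrite dotE; apply: eq_bigr => j _; rewrite mulrA.
rewrite !sqE -dotE; have := CauchySchwarz (@dotmx C n) (r a) (r b).
by move=> /Order.le_of_leif.
Qed.

End WeightedCauchySchwarz.

Section PositiveOperators.
Variables (C : numClosedFieldType) (d : nat).
Implicit Types (A B : 'M[C]_d) (v x : 'cV[C]_d).
Implicit Types (u : 'I_d -> 'cV[C]_d) (l : 'I_d -> C).

Local Notation dot u x := ((adj u *m x) 0 0).
Local Notation qf A v := ((adj v *m A *m v) 0 0).

Lemma dotC (w x : 'cV[C]_d) : dot w x = (dot x w)^*.
Proof. by rewrite -[adj w *m x]adjK adj_mul adjK !mxE. Qed.

Definition orthonormal_basis (u : 'I_d -> 'cV[C]_d) : Prop :=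
  (forall i j, adj (u i) *m u j = (i == j)%:R%:M) /\
  \sum_j u j *m adj (u j) = 1%:M.

Definition spectral_sum (u : 'I_d -> 'cV[C]_d) (l : 'I_d -> C) : 'M[C]_d :=
  \sum_j l j *: (u j *m adj (u j)).

Lemma spectral_sum_apply u l x :
  spectral_sum u l *m x = \sum_j (l j * dot (u j) x) *: u j.
Proof.
rewrite mulmx_suml; apply: eq_bigr => j _.
by rewrite -scalemxAl -mulmxA {1}[adj (u j) *m x]mx11_scalar mul_mx_scalar scalerA.
Qed.

Lemma spectral_sum_eigen u l k : orthonormal_basis u ->
  spectral_sum u l *m u k = l k *: u k.
Proof.
move=> [orth _]; rewrite spectral_sum_apply (bigD1 k) //= big1 ?addr0.
  by rewrite orth eqxx mxE eqxx mulr1.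
by move=> j /negbTE jk; rewrite orth jk mxE mulr0 scale0r.
Qed.

Lemma spectral_sum_quad u l x :
  qf (spectral_sum u l) x = \sum_j l j * (dot (u j) x * (dot (u j) x)^*).
Proof.
rewrite -mulmxA spectral_sum_apply mulmx_sumr summxE; apply: eq_bigr => j _.
by rewrite -scalemxAr mxE (dotC x (u j)) mulrA.
Qed.

Lemma psd_spectral A : psd A -> exists u l,
  [/\ forall j, 0 <= l j, orthonormal_basis u & A = spectral_sum u l].
Proof.
move=> [A_herm A_ge0].
have A_normal : A \is normalmx.
  by apply/hermitian_normalmx/is_hermitianmxP; rewrite expr0 scale1r adjE -A_herm.
have /orthomx_spectralP A_diag := A_normal.
set P := spectralmx A in A_diag; set l := spectral_diag A in A_diag.
have P_unitary : P \is unitarymx by apply: spectral_unitarymx.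
have invP : invmx P = adj P by rewrite -adjE invmx_unitary.
have PPadj : P *m adj P = 1%:M by rewrite -adjE; apply/unitarymxP.
have PadjP : adj P *m P = 1%:M by rewrite -invP mulVmx // unitarymx_unit.
have colP j : adj (col j (adj P)) = row j P.
  by apply/matrixP=> a b; rewrite !mxE conjCK.
pose u j := col j (adj P).
have u_orth i j : adj (u i) *m u j = (i == j)%:R%:M.
  have -> : adj (u i) *m u j = ((P *m adj P) i j)%:M.
    apply/matrixP=> a b; rewrite colP !ord1 !mxE /=.
    by apply: eq_bigr => k _; rewrite !mxE.
  by rewrite PPadj mxE.
have onb : orthonormal_basis u.
  split => //; have := mul_diag_mx_outer (adj P) P (const_mx 1).
  rewrite diag_const_mx mulmx1 PadjP => ->.
  by apply: eq_bigr => j _; rewrite mxE scale1r colP.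
have A_sum : A = spectral_sum u (fun j => l 0 j).
  by rewrite A_diag invP mul_diag_mx_outer; apply: eq_bigr => j _; rewrite colP.
exists u, (fun j => l 0 j); split => // j; have := A_ge0 (u j).
rewrite A_sum -mulmxA spectral_sum_eigen // -scalemxAr u_orth eqxx.
by rewrite !mxE eqxx mulr1.
Qed.

Lemma psd_kernel A x : psd A -> qf A x = 0 -> A *m x = 0.
Proof.
move=> /psd_spectral [u [l [l_ge0 onb ->]]]; rewrite spectral_sum_quad.
move=> /psumr_eq0P vanish; rewrite spectral_sum_apply big1 // => j _.
have /eqP := vanish (fun i _ => mulr_ge0 (l_ge0 i) (mul_conjC_ge0 _)) j isT.
by rewrite mulf_eq0 mul_conjC_eq0 => /orP[] /eqP ->; rewrite ?mulr0 ?mul0r scale0r.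
Qed.

Lemma psd0 : psd (0 : 'M[C]_d).
Proof. by split=> [|v]; rewrite ?adj0 // mulmx0 mul0mx mxE. Qed.

Lemma psdD A B : psd A -> psd B -> psd (A + B).
Proof.
move=> [A_herm A_ge0] [B_herm B_ge0]; split; first by rewrite adjD -A_herm -B_herm.
by move=> v; rewrite mulmxDr mulmxDl mxE addr_ge0.
Qed.

Lemma psd_sum I (r : seq I) (P : pred I) (F : I -> 'M[C]_d) :
  (forall i, P i -> psd (F i)) -> psd (\sum_(i <- r | P i) F i).
Proof. by move=> F_psd; apply: big_ind => //; [exact: psd0 | exact: psdD]. Qed.

Lemma psdZ c A : 0 <= c -> psd A -> psd (c *: A).
Proof.
move=> c_ge0 [A_herm A_ge0]; split; first by rewrite adjZ geC0_conj // -A_herm.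
by move=> v; rewrite -scalemxAr -scalemxAl mxE mulr_ge0.
Qed.

Lemma psd_congr (M : 'M[C]_d) A : psd A -> psd (M *m A *m adj M).
Proof.
move=> [A_herm A_ge0]; split; first by rewrite !adj_mul adjK -A_herm mulmxA.
by move=> v; have := A_ge0 (adj M *m v); rewrite adj_mul adjK !mulmxA.
Qed.

End PositiveOperators.

Definition range_sub (C : numClosedFieldType) (d : nat) (A B : 'M[C]_d) : Prop :=
  exists D, A = B *m D.

Section RangeInclusion.
Variables (C : numClosedFieldType) (d : nat).
Implicit Types (A B Z : 'M[C]_d).

Lemma range_sub_refl A : range_sub A A.
Proof. by exists 1%:M; rewrite mulmx1. Qed.

Lemma range_sub_trans A B Z : range_sub A B -> range_sub B Z -> range_sub A Z.
Proof. by move=> [D1 ->] [D2 ->]; exists (D2 *m D1); rewrite mulmxA. Qed.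

Lemma range_subD A B Z : range_sub A Z -> range_sub B Z -> range_sub (A + B) Z.
Proof. by move=> [D1 ->] [D2 ->]; exists (D1 + D2); rewrite mulmxDr. Qed.

Lemma range_sub_rank A B : range_sub A B -> (\rank A <= \rank B)%N.
Proof. by move=> [D ->]; apply: mxrankM_maxl. Qed.

Lemma range_sub_rank_eq A B :
  range_sub A B -> \rank A = \rank B -> range_sub B A.
Proof.
move=> [D AB] eq_rank.
have sAB : (A^T <= B^T)%MS by rewrite AB trmx_mul submxMl.
have := mxrank_leqif_sup sAB; rewrite !mxrank_tr eq_rank => -[_].
rewrite eqxx => /esym /submxP [D' BA].
by exists D'^T; rewrite -[B]trmxK BA trmx_mul trmxK.
Qed.

End RangeInclusion.

Section SpanAndSupport.
Variables (C : numClosedFieldType) (d : nat).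
Implicit Types (A : 'M[C]_d) (v w x : 'cV[C]_d) (P Q : 'cV[C]_d -> Prop).

Lemma span0 P : span P 0.
Proof.
by exists 0%N, (fun _ => 0), (fun _ => 0); split; [case | rewrite big_ord0].
Qed.

Lemma span_gen P w : P w -> span P w.
Proof.
move=> Pw; exists 1%N, (fun _ => w), (fun _ => 1).
by split => //; rewrite big_ord1 scale1r.
Qed.

Lemma spanZ P a w : span P w -> span P (a *: w).
Proof.
move=> [n [f [c [Pf ->]]]]; exists n, f, (fun i => a * c i); split => //.
by rewrite scaler_sumr; apply: eq_bigr => i _; rewrite scalerA.
Qed.

Lemma spanD P w1 w2 : span P w1 -> span P w2 -> span P (w1 + w2).
Proof.
move=> [n1 [f1 [c1 [Pf1 ->]]]] [n2 [f2 [c2 [Pf2 ->]]]].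
pose glue T (g1 : 'I_n1 -> T) (g2 : 'I_n2 -> T) (i : 'I_(n1 + n2)) :=
  match split i with inl a => g1 a | inr b => g2 b end.
exists (n1 + n2)%N, (glue _ f1 f2), (glue _ c1 c2); split.
  by move=> i; rewrite /glue; case: (split i).
rewrite big_split_ord; congr (_ + _); apply: eq_bigr => i _.
  by rewrite /glue (unsplitK (inl i : 'I_n1 + 'I_n2)).
by rewrite /glue (unsplitK (inr i : 'I_n1 + 'I_n2)).
Qed.

Lemma span_sum P I (r : seq I) (R : pred I) (F : I -> 'cV[C]_d) :
  (forall i, R i -> span P (F i)) -> span P (\sum_(i <- r | R i) F i).
Proof. by move=> spanF; apply: big_ind => //; [exact: span0 | exact: spanD]. Qed.

Lemma span_mono P Q w : (forall x, P x -> Q x) -> span P w -> span Q w.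
Proof.
by move=> PQ [n [f [c [Pf ->]]]]; exists n, f, c; split => // i; apply: PQ.
Qed.

Lemma span_idem P w : span (span P) w -> span P w.
Proof. by move=> [n [f [c [Pf ->]]]]; apply: span_sum => i _; exact: spanZ. Qed.

Lemma supp_range A v : supp A v -> exists x, v = A *m x.
Proof.
case=> n [f [c [Pf ->]]]; elim/big_rec: _ => [|i y _ [x ->]].
  by exists 0; rewrite mulmx0.
have [a [a_neq0 eig]] := Pf i.
exists (c i *: (a^-1 *: f i) + x).
by rewrite mulmxDr -!scalemxAr eig [a^-1 *: _]scalerA mulVf // scale1r.
Qed.

Lemma range_supp A x : psd A -> supp A (A *m x).
Proof.
move=> /psd_spectral [u [l [_ onb ->]]]; rewrite spectral_sum_apply.
apply: span_sum => j _; have [lj0|lj_neq0] := eqVneq (l j) 0.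
  by rewrite lj0 mul0r scale0r; apply: span0.
by apply/spanZ/span_gen; exists (l j); split => //; exact: spectral_sum_eigen.
Qed.

End SpanAndSupport.

Section Domination.
Variables (C : numClosedFieldType) (d : nat).
Implicit Types (A B X Y : 'M[C]_d) (x z : 'cV[C]_d).

Local Notation qf A v := ((adj v *m A *m v) 0 0).

(* Range criterion: if every kernel vector of the psd B annihilates A from the
   left, then range A <= range B.  B is inverted on its eigenspaces with
   nonzero eigenvalue. *)
Lemma range_sub_of_kernel A B : psd B ->
  (forall x, B *m x = 0 -> adj x *m A = 0) -> range_sub A B.
Proof.
move=> /psd_spectral [u [l [_ onb B_sum]]] kerB.
exists (spectral_sum u (fun j => (l j)^-1) *m A).
have [_ complete] := onb.
rewrite mulmxA {1}B_sum /spectral_sum mulmx_sumr mulmx_suml.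
rewrite -{1}(mul1mx A) -complete mulmx_suml; apply: eq_bigr => j _.
rewrite -scalemxAr mulmxA -/(spectral_sum u l) spectral_sum_eigen //.
rewrite -!scalemxAl scalerA.
have [lj0|lj_neq0] := eqVneq (l j) 0; last by rewrite mulVf // scale1r.
have : B *m u j = 0 by rewrite B_sum spectral_sum_eigen // lj0 scale0r.
by move/kerB; rewrite -mulmxA => ->; rewrite !mulmx0 scaler0.
Qed.

Lemma psd_range_subDl A B : psd A -> psd B -> range_sub A (A + B).
Proof.
move=> A_psd B_psd; apply: range_sub_of_kernel; first exact: psdD.
move=> x ABx; have [A_herm A_ge0] := A_psd; have [_ B_ge0] := B_psd.
have : qf (A + B) x = 0 by rewrite -mulmxA ABx mulmx0 mxE.
rewrite mulmxDr mulmxDl mxE => /eqP; rewrite paddr_eq0 //.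
case/andP => /eqP /(psd_kernel A_psd) Ax _.
by rewrite A_herm -adj_mul Ax adj0.
Qed.

(* Cauchy-Schwarz for a psd form: |Yz><Yz| <= <z, Yz> Y. *)
Lemma psd_outer_dominated Y z : psd Y ->
  psd (qf Y z *: Y - (Y *m z) *m adj (Y *m z)).
Proof.
move=> Y_psd; have [Y_herm Y_ge0] := Y_psd.
split.
  by rewrite adjB adjZ geC0_conj ?Y_ge0 // -Y_herm (adj_mul (Y *m z)) adjK.
move=> v; rewrite mulmxBr mulmxBl -scalemxAr -scalemxAl mxE.
rewrite [X in _ + X]mxE [X in X + _]mxE subr_ge0.
have -> : adj v *m (Y *m z *m adj (Y *m z)) *m v =
          (adj v *m (Y *m z)) *m (adj (Y *m z) *m v) by rewrite !mulmxA.
rewrite [X in X <= _]mxE big_ord1 (dotC (Y *m z) v) -normCK.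
have [u [l [l_ge0 onb Y_sum]]] := psd_spectral Y_psd.
rewrite Y_sum !spectral_sum_quad spectral_sum_apply mulmx_sumr summxE.
under eq_bigr do rewrite -scalemxAr mxE (dotC v).
exact: weighted_CauchySchwarz.
Qed.

(* A psd X whose range lies in that of the psd Y is dominated by a multiple
   of Y: X = sum_i k_i |u_i><u_i| with u_i = Y z_i / k_i for k_i != 0. *)
Lemma psd_dominated X Y : psd X -> psd Y -> range_sub X Y ->
  exists c, 0 <= c /\ psd (c *: Y - X).
Proof.
move=> X_psd Y_psd [D XYD].
have [u [k [k_ge0 onb X_sum]]] := psd_spectral X_psd.
pose z i := D *m u i.
have Yz i : Y *m z i = k i *: u i.
  by rewrite /z mulmxA -XYD X_sum spectral_sum_eigen.
have X_outer : X = \sum_i (k i)^-1 *: ((Y *m z i) *m adj (Y *m z i)).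
  rewrite X_sum; apply: eq_bigr => i _.
  rewrite Yz adjZ geC0_conj // -scalemxAl -scalemxAr !scalerA.
  have [->|ki_neq0] := eqVneq (k i) 0; first by rewrite invr0 !mul0r.
  by rewrite mulVf // mul1r.
exists (\sum_i (k i)^-1 * qf Y (z i)); split.
  by apply: sumr_ge0 => i _; rewrite mulr_ge0 ?invr_ge0 //; case: Y_psd.
rewrite X_outer scaler_suml -sumrB; apply: psd_sum => i _.
rewrite -scalerA -scalerBr; apply: psdZ; rewrite ?invr_ge0 //.
exact: psd_outer_dominated.
Qed.

(* Positive linear maps are monotone for range inclusion between psd
   operators: X <= c Y gives T X <= c T Y, hence range (T X) <= range (T Y). *)
Lemma positive_map_range_sub (T : 'M[C]_d -> 'M[C]_d) :
  (forall A B, T (A + B) = T A + T B) -> (forall c A, T (c *: A) = c *: T A) ->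
  (forall A, psd A -> psd (T A)) ->
  forall X Y, psd X -> psd Y -> range_sub X Y -> range_sub (T X) (T Y).
Proof.
move=> TD TZ T_psd X Y X_psd Y_psd XY.
have [c [c_ge0 cYX_psd]] := psd_dominated X_psd Y_psd XY.
have [D0 e] := psd_range_subDl (T_psd _ X_psd) (T_psd _ cYX_psd).
by exists (c *: D0); rewrite e -TD addrC subrK TZ -scalemxAl scalemxAr.
Qed.

End Domination.

Lemma additive_sum (U V : zmodType) (T : U -> V) :
  {morph T : x y / x + y} -> forall I (r : seq I) (P : pred I) (G : I -> U),
  T (\sum_(i <- r | P i) G i) = \sum_(i <- r | P i) T (G i).
Proof.
move=> TD I r P G; apply: big_morph => //.
by apply/(addrI (T 0)); rewrite -TD !addr0.
Qed.

Section PositiveMapIterates.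
Variables (C : numClosedFieldType) (d : nat) (T : 'M[C]_d -> 'M[C]_d).
Hypothesis TD : forall A B, T (A + B) = T A + T B.
Hypothesis TZ : forall c A, T (c *: A) = c *: T A.
Hypothesis T_psd : forall A, psd A -> psd (T A).
Implicit Types (A X Y : 'M[C]_d).

Lemma iter_psd n A : psd A -> psd (iter n T A).
Proof. by move=> A_psd; elim: n => //= n; apply: T_psd. Qed.

Lemma iter_range_sub n X Y : psd X -> psd Y -> range_sub X Y ->
  range_sub (iter n T X) (iter n T Y).
Proof.
move=> X_psd Y_psd XY; elim: n => //= n IH.
by apply: positive_map_range_sub IH => //; apply: iter_psd.
Qed.

Variable rho : 'M[C]_d.
Hypothesis rho_psd : psd rho.

Definition partial_sum k := \sum_(i < k.+1) iter i T rho.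

Lemma partial_sum_psd k : psd (partial_sum k).
Proof. by apply: psd_sum => i _; apply: iter_psd. Qed.

Lemma partial_sumSl k : partial_sum k.+1 = rho + T (partial_sum k).
Proof. by rewrite /partial_sum big_ord_recl (additive_sum TD). Qed.

Lemma partial_sumSr k : partial_sum k.+1 = partial_sum k + iter k.+1 T rho.
Proof. by rewrite /partial_sum big_ord_recr. Qed.

Lemma iter_range_sub_partial_sum n : range_sub (iter n T rho) (partial_sum n).
Proof.
case: n => [|n]; first by rewrite /partial_sum big_ord1; apply: range_sub_refl.
rewrite partial_sumSr addrC.
by apply: psd_range_subDl; [apply: iter_psd | apply: partial_sum_psd].
Qed.

Lemma partial_sum_mono j k : (j <= k)%N ->
  range_sub (partial_sum j) (partial_sum k).
Proof.
move=> /subnK <-; elim: (k - j)%N => [|n IH]; first exact: range_sub_refl.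
apply: range_sub_trans IH _; rewrite addSn partial_sumSr.
by apply: psd_range_subDl; [apply: partial_sum_psd | apply: iter_psd].
Qed.

(* Once the range stops growing it never grows again:
   S_(k+2) = rho + T S_(k+1) and T S_(k+1) <= T S_k <= S_(k+1). *)
Lemma partial_sum_stable_step k :
  range_sub (partial_sum k.+1) (partial_sum k) ->
  range_sub (partial_sum k.+2) (partial_sum k.+1).
Proof.
move=> stalls; rewrite partial_sumSl; apply: range_subD.
  exact: range_sub_trans (iter_range_sub_partial_sum 0) (partial_sum_mono _).
have T_stalls := iter_range_sub 1 (partial_sum_psd _) (partial_sum_psd _) stalls.
apply: range_sub_trans T_stalls _; rewrite /= [partial_sum k.+1]partial_sumSl addrC.
by apply: psd_range_subDl; [apply/T_psd/partial_sum_psd | ].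
Qed.

Lemma partial_sum_stable k :
  range_sub (partial_sum k.+1) (partial_sum k) ->
  forall n, range_sub (partial_sum n) (partial_sum k).
Proof.
move=> stalls n; have [nk|kn] := leqP n k; first exact: partial_sum_mono.
have step i : range_sub (partial_sum (i + k).+1) (partial_sum (i + k)).
  by elim: i => [|i IH] //; exact: partial_sum_stable_step.
rewrite -(subnK (ltnW kn)); elim: (n - k)%N => [|i IH]; first exact: range_sub_refl.
exact: range_sub_trans (step i) IH.
Qed.

(* The ranks of S_0 <= ... <= S_d cannot all increase strictly in a space of
   dimension d, so the range stalls at some k < d (here rho != 0 is used). *)
Lemma partial_sum_stalls : rho != 0 ->
  exists2 k, (k < d)%N & range_sub (partial_sum k.+1) (partial_sum k).
Proof.
move=> rho_neq0.
have [/existsP [k /eqP eq_rank] | ] := boolP [exists k : 'I_d,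
    \rank (partial_sum k.+1) == \rank (partial_sum k)].
  exists k => //; apply: range_sub_rank_eq (esym eq_rank).
  exact: partial_sum_mono.
rewrite negb_exists => /forallP grows.
suff rank_gt k : (k <= d)%N -> (k < \rank (partial_sum k))%N.
  by have := rank_gt d (leqnn d); rewrite ltnNge rank_leq_row.
elim: k => [_|k IH kd]; first by rewrite /partial_sum big_ord1 lt0n mxrank_eq0.
have := range_sub_rank (partial_sum_mono (leqnSn k)).
rewrite leq_eqVlt eq_sym (negbTE (grows (Ordinal kd))) /=.
exact/leq_ltn_trans/IH/ltnW.
Qed.

Lemma iter_range_sub_partial_sum_pred n : (0 < d)%N -> rho != 0 ->
  range_sub (iter n T rho) (partial_sum d.-1).
Proof.
move=> d_gt0 rho_neq0; have [k kd stalls] := partial_sum_stalls rho_neq0.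
apply: range_sub_trans (iter_range_sub_partial_sum n) _.
apply: range_sub_trans (partial_sum_stable stalls n) (partial_sum_mono _).
by rewrite -ltnS prednK.
Qed.

End PositiveMapIterates.

Lemma completely_positive_psd (C : numClosedFieldType) (d : nat)
    (T : 'M[C]_d -> 'M[C]_d) :
  completely_positive T -> forall A, psd A -> psd (T A).
Proof.
move=> T_cp A [A_herm A_ge0].
have A_block : psd_block (fun _ _ : 'I_1 => A).
  by split => // v; rewrite !big_ord1.
have [TA_herm TA_ge0] := T_cp 1%N _ A_block.
split=> [|v]; first exact: TA_herm ord0 ord0.
by have := TA_ge0 (fun _ => v); rewrite !big_ord1.
Qed.

Section ConcurrentProgram.
Variables (C : numClosedFieldType) (d m : nat).
Variable E : 'I_m -> {linear 'M[C]_d -> 'M[C]_d}.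
Variable M1 : 'M[C]_d.
Hypothesis E_psd : forall k A, psd A -> psd (E k A).
Implicit Types (A B : 'M[C]_d) (f : seq 'I_m).

Local Notation F := (Fsum E M1).

Lemma FkD k A B : Fk E M1 k (A + B) = Fk E M1 k A + Fk E M1 k B.
Proof. by rewrite /Fk mulmxDr mulmxDl raddfD. Qed.

Lemma FkZ k c A : Fk E M1 k (c *: A) = c *: Fk E M1 k A.
Proof. by rewrite /Fk -scalemxAr -scalemxAl linearZ. Qed.

Lemma Fk_psd k A : psd A -> psd (Fk E M1 k A).
Proof. by move=> A_psd; apply/E_psd/psd_congr. Qed.

Lemma FD A B : F (A + B) = F A + F B.
Proof. by rewrite /Fsum -big_split; apply: eq_bigr => k _; rewrite FkD. Qed.

Lemma FZ c A : F (c *: A) = c *: F A.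
Proof. by rewrite /Fsum scaler_sumr; apply: eq_bigr => k _; rewrite FkZ. Qed.

Lemma F_psd A : psd A -> psd (F A).
Proof. by move=> A_psd; apply: psd_sum => k _; apply: Fk_psd. Qed.

Lemma Fstr_psd f A : psd A -> psd (Fstr E M1 f A).
Proof. by elim: f A => //= k f IH A A_psd; apply/IH/Fk_psd. Qed.

Lemma Fstr_sum f I (r : seq I) (P : pred I) (G : I -> 'M[C]_d) :
  Fstr E M1 f (\sum_(i <- r | P i) G i) = \sum_(i <- r | P i) Fstr E M1 f (G i).
Proof.
have FstrD A B : Fstr E M1 f (A + B) = Fstr E M1 f A + Fstr E M1 f B.
  by elim: f A B => //= k f IH A B; rewrite FkD IH.
exact: (@additive_sum _ _ (Fstr E M1 f) FstrD).
Qed.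

Lemma Fk_range_sub k A : psd A -> range_sub (Fk E M1 k A) (F A).
Proof.
move=> A_psd; rewrite /Fsum (bigD1 k) //=.
by apply: psd_range_subDl; [|apply: psd_sum => j _]; apply: Fk_psd.
Qed.

Lemma Fstr_range_sub f A :
  psd A -> range_sub (Fstr E M1 f A) (iter (size f) F A).
Proof.
elim: f A => [|k f IH] A A_psd; first exact: range_sub_refl.
apply: range_sub_trans (IH _ (Fk_psd k A_psd)) _; rewrite [size _]/= iterSr.
apply: (iter_range_sub FD FZ F_psd); first exact: Fk_psd.
  exact: F_psd.
exact: Fk_range_sub.
Qed.

(* Conversely the range of F^n rho is reachable: F^n = sum over all strings
   f of length n of F_f. *)
Lemma iterF_reachable n rho x : psd rho -> reachable E M1 rho (iter n F rho *m x).
Proof.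
elim: n rho x => [|n IH] rho x rho_psd.
  by apply: span_gen; exists [::]; apply: range_supp.
rewrite iterSr; apply/span_idem/(span_mono _ (IH _ x (F_psd rho_psd))).
move=> w [f /supp_range [y ->]].
rewrite /Fsum Fstr_sum mulmx_suml; apply: span_sum => k _.
by apply: span_gen; exists (k :: f); apply/range_supp/Fstr_psd.
Qed.

End ConcurrentProgram.

Theorem mainTheorem1 (C : numClosedFieldType) (d : nat) (m : nat)
  (E : 'I_m -> {linear 'M[C]_d -> 'M[C]_d}) (M0 M1 rho0 : 'M[C]_d) :
  (0 < d)%N -> (0 < m)%N ->
  (forall k, super_operator (E k) /\ trace_preserving (E k)) ->
  adj M0 *m M0 + adj M1 *m M1 = 1%:M ->
  density_operator rho0 ->
  forall v : 'cV[C]_d,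
    reachable E M1 rho0 v <->
    supp (\sum_(i < d) iter i (Fsum E M1) rho0) v.
Proof.
move=> d_gt0 _ E_super _ [rho0_psd tr_rho0] v.
have E_psd k : forall A, psd A -> psd (E k A).
  by apply: completely_positive_psd; have [[]] := E_super k.
have rho0_neq0 : rho0 != 0.
  by apply: contra_eq_neq tr_rho0 => ->; rewrite mxtrace0 eq_sym oner_neq0.
have FD := FD E M1; have FZ := FZ E M1; have F_psd := F_psd M1 E_psd.
have -> : \sum_(i < d) iter i (Fsum E M1) rho0 = partial_sum (Fsum E M1) rho0 d.-1.
  by rewrite /partial_sum prednK.
have S_psd := partial_sum_psd F_psd rho0_psd d.-1.
split.
-
  move=> reach; apply/span_idem/(span_mono _ reach) => w [f /supp_range [y ->]].
  have [D1 ->] := Fstr_range_sub M1 E_psd f rho0_psd.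
  have [D2 ->] := iter_range_sub_partial_sum_pred FD FZ F_psd rho0_psd
    (size f) d_gt0 rho0_neq0.
  by rewrite -!mulmxA; apply: range_supp.
-
  move=> /supp_range [x ->]; rewrite /partial_sum mulmx_suml.
  by apply: span_sum => i _; apply: iterF_reachable.
Qed.
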